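(* Let $h,w\ge 4$ and $G=C_w(U)\sqcap C_h$ with $U=\{i,j\}$, $i\ne j$. (1) If $i$ and $j$ are adjacent in $C_w$, then $Z(G)\le h$. (2) If $i$ and $j$ are not adjacent in $C_w$, then $Z(G)\le 2h$.
   Context: All graphs are finite, simple and undirected. Zero forcing: given a graph $G$ and a set $S\subseteq V(G)$ of initially filled vertices, the color change rule says that if a filled vertex $v$ has exactly one unfilled neighbor $u$, then $v$ forces $u$ to become filled. $S$ is a zero forcing set if repeatedly applying this rule eventually fills every vertex of $G$. The zero forcing number $Z(G)$ is the minimum cardinality of a zero forcing set of $G$. The cycle $C_n$ ($n\ge3$) has vertex set $\{1,\dots,n\}$ and edges $\{k,k+1\}$ for $1\le k\le n-1$ together with $\{n,1\}$. Generalized hierarchical product: for graphs $W,H$ and $U\subseteq V(W)$ (the root set), $W(U)\sqcap H$ is the graph with vertex set $V(W)\times V(H)$ in which $(x_1,y_1)$ and $(x_2,y_2)$ are adjacent iff either ($x_1=x_2\in U$ and $y_1y_2\in E(H)$) or ($y_1=y_2$ and $x_1x_2\in E(W)$). *)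

From mathcomp Require Import all_boot all_order.
Set Implicit Arguments. Unset Strict Implicit. Unset Printing Implicit Defensive.

(* Cycle C_n on vertices 'I_n; paper's vertex k (1<=k<=n) is ordinal k-1.
   Edges {k,k+1} and {n,1}, i.e. x ~ y iff y = x+1 mod n or x = y+1 mod n. *)
Definition cycle_adj (n : nat) : rel 'I_n :=
  fun x y => ((x.+1 %% n) == y) || ((y.+1 %% n) == x).

Definition hprod_adj (A B : finType) (adjW : rel A) (U : {set A}) (adjH : rel B)
  : rel (A * B) :=
  fun p q =>
    ((p.1 == q.1) && (p.1 \in U) && adjH p.2 q.2)
    || ((p.2 == q.2) && adjW p.1 q.1).

Definition force_step (T : finType) (adj : rel T) (F : {set T}) : {set T} :=
  F :|: [set u | [exists v, [&& v \in F, adj v u, u \notin F &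
                   [forall x, (adj v x && (x != u)) ==> (x \in F)]]]].

(* The set of vertices filled after repeatedly applying the rule
   (#|T| rounds suffice, since each productive round fills a new vertex). *)
Definition force_closure (T : finType) (adj : rel T) (S : {set T}) : {set T} :=
  iter #|T| (force_step adj) S.

Definition zero_forcing_set (T : finType) (adj : rel T) (S : {set T}) : bool :=
  force_closure adj S == [set: T].

(* Zero forcing number: minimum size of a zero forcing set
   ([set: T] is always one, so #|T| is a valid upper default). *)
Definition zero_forcing_number (T : finType) (adj : rel T) : nat :=
  \big[minn/#|T|]_(S : {set T} | zero_forcing_set adj S) #|S|.
Arguments cycle_adj n : clear implicits.

(* Coordinates are taken modulo w and h.  Along a row of the product, only the two
   root columns have vertical edges, so two consecutive filled vertices of a row
   keep forcing along the row until a root column is reached.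
   Any two roots i, j: fill the columns i and i + 1.  Each row fills forwards from
   i up to j; then i, whose other three neighbours are filled, forces i - 1, and
   the row fills backwards from i down to j.
   Adjacent roots j = i + 1: fill column i except its last two vertices, together
   with (i - 1, 0) and (i - 1, -1).  Row 0 fills; then (i, 0) and (i, -1) force
   the rest of column i, and row -1 fills.  Once rows k - 1 and k are full,
   (i + 1, k) forces (i + 1, k + 1), then (i, k + 1) forces (i - 1, k + 1), and
   row k + 1 fills. *)

From HB Require Import structures.
From mathcomp Require Import all_boot all_order all_algebra zify.
Set Implicit Arguments. Unset Strict Implicit. Unset Printing Implicit Defensive.
Import GRing.Theory.

HB.instance Definition _ := SemiGroup.isComLaw.Build nat minn minnA minnC.

Section ZeroForcing.
Variables (T : finType) (adj : rel T).

Lemma zero_forcing_number_le (S : {set T}) :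
  zero_forcing_set adj S -> zero_forcing_number adj <= #|S|.
Proof.
move=> zfS; rewrite /zero_forcing_number (big_rem_AC _ _ _ _ (mem_index_enum S)).
by rewrite zfS geq_minl.
Qed.

Lemma zero_forcing_setP (S : {set T}) :
  reflect (forall v, v \in force_closure adj S) (zero_forcing_set adj S).
Proof.
by apply: (iffP eqP) => [-> v | fullS]; [rewrite inE | apply/setP => v; rewrite fullS inE].
Qed.

Lemma subset_force_step (F : {set T}) : F \subset force_step adj F.
Proof. exact: subsetUl. Qed.

Lemma subset_force_closure (S : {set T}) : S \subset force_closure adj S.
Proof.
rewrite /force_closure; elim: #|T| => [|k IHk] //=.
exact: subset_trans IHk (subset_force_step _).
Qed.

(* Each round either is stationary or fills a new vertex, so after #|T| rounds
   either a fixpoint or the whole vertex set has been reached. *)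
Lemma force_step_closure (S : {set T}) :
  force_step adj (force_closure adj S) = force_closure adj S.
Proof.
set f := force_step adj.
have grow k : f (iter k f S) = iter k f S \/ k <= #|iter k f S|.
  elim: k => [|k [fixk | IHk]]; [by right | by left; rewrite /= fixk fixk |].
  have [fixk | nfixk] := eqVneq (f (iter k f S)) (iter k f S).
    by left; rewrite /= fixk fixk.
  right; apply: leq_ltn_trans IHk (proper_card _).
  by rewrite properEneq eq_sym nfixk subset_force_step.
rewrite /force_closure; have [// | full] := grow #|T|.
have -> : iter #|T| f S = [set: T].
  by apply/eqP; rewrite eqEcard subsetT cardsT full.
by apply/eqP; rewrite eqEsubset subsetT subset_force_step.
Qed.

Lemma force_closure_rule (S : {set T}) (v u : T) :
  v \in force_closure adj S -> adj v u ->
  (forall x, adj v x -> x != u -> x \in force_closure adj S) ->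
  u \in force_closure adj S.
Proof.
move=> Cv vu others; rewrite -force_step_closure; apply/setUP.
have [Cu | nCu] := boolP (u \in force_closure adj S); [by left | right].
rewrite inE; apply/existsP; exists v; rewrite Cv vu nCu /=.
by apply/forallP => x; apply/implyP => /andP[]; apply: others.
Qed.

End ZeroForcing.

Section CycleWalk.
Variable n : nat.
Local Notation V := 'I_n.+2.
Local Open Scope ring_scope.

Lemma cycle_adjE (x y : V) : cycle_adj n.+2 x y = (y == x + 1) || (y == x - 1).
Proof.
have succE (z z' : V) : ((z.+1 %% n.+2)%N == z') = (z + 1 == z').
  by rewrite (add_Zp_1 (p := n.+2)).
by rewrite /cycle_adj !succE (eq_sym y) (eq_sym y (x - 1)) subr_eq (eq_sym x).
Qed.

Definition unit_step (d : V) := (d == 1) || (d == -1).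

Lemma unit_step1 : unit_step 1.
Proof. by rewrite /unit_step eqxx. Qed.

Lemma unit_stepN1 : unit_step (-1).
Proof. by rewrite /unit_step eqxx orbT. Qed.

Definition walk (a d : V) (l : nat) : V := a + l%:R * d.

Lemma walk0 a d : walk a d 0 = a.
Proof. by rewrite /walk mul0r addr0. Qed.

Lemma walkS a d l : walk a d l.+1 = walk a d l + d.
Proof. by rewrite /walk -natr1 mulrDl mul1r addrA. Qed.

Lemma walk1 a d : walk a d 1 = a + d.
Proof. by rewrite walkS walk0. Qed.

Lemma unit_step_sqr d : unit_step d -> d * d = 1.
Proof. by case/orP=> /eqP->; rewrite ?mulr1 ?mulrNN ?mulr1. Qed.

Lemma walk_inj a d k l : unit_step d -> (k < n.+2)%N -> (l < n.+2)%N ->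
  (walk a d k == walk a d l) = (k == l).
Proof.
move=> /unit_step_sqr dd kn ln.
have dK : cancel (fun z : V => z * d) (fun z => z * d).
  by move=> z; rewrite -mulrA dd mulr1.
by rewrite (can_eq (addKr a)) (can_eq dK) !Zp_nat -val_eqE /= !modn_small.
Qed.

Lemma walk_cover a d x : unit_step d ->
  exists2 l, (l < n.+2)%N & x = walk a d l.
Proof.
move=> /unit_step_sqr dd; exists ((x - a) * d : V) => //.
by rewrite /walk natr_Zp -mulrA dd mulr1 addrC subrK.
Qed.

Lemma walk_back a l : (l <= n.+2)%N -> walk a (-1) (n.+2 - l) = walk a 1 l.
Proof.
move=> ln; apply/eqP; rewrite (can_eq (addKr a)) mulrN1 mulr1 eqr_oppLR.
by rewrite -subr_eq0 opprK -natrD subnK // (pchar_Zp (p := n.+2)).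
Qed.

Lemma natr_lastZp : (n.+1)%:R = -1 :> V.
Proof. by apply/eqP; rewrite -addr_eq0 natr1 (pchar_Zp (p := n.+2)). Qed.

End CycleWalk.

Section CycleProduct.
Variables (n m : nat) (U : {set 'I_n.+2}) (S : {set 'I_n.+2 * 'I_m.+2}).
Local Notation G := (hprod_adj (cycle_adj n.+2) U (cycle_adj m.+2)).
Local Notation C := (force_closure G S).
Local Open Scope ring_scope.

Lemma hprod_cycle_adjE x y q : G (x, y) q =
  (q \in [:: (x + 1, y); (x - 1, y)]) || (x \in U) && (q \in [:: (x, y + 1); (x, y - 1)]).
Proof.
case: q => x' y'; rewrite /hprod_adj /= !cycle_adjE !inE !xpair_eqE.
rewrite (eq_sym x) (eq_sym y); case: (x' == x); case: (y' == y); case: (x \in U);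
  by case: (x' == x + 1); case: (x' == x - 1); case: (y' == y + 1); case: (y' == y - 1).
Qed.

Lemma force_at_root x y u : x \in U -> (x, y) \in C ->
  let N := [:: (x + 1, y); (x - 1, y); (x, y + 1); (x, y - 1)] in
  u \in N -> {in N, forall q, q != u -> q \in C} -> u \in C.
Proof.
move=> xU Cxy N uN others; apply: (force_closure_rule Cxy).
  by move: uN; rewrite hprod_cycle_adjE xU !inE -!orbA.
by move=> q; rewrite hprod_cycle_adjE xU !inE -!orbA => qN; apply: others; rewrite !inE.
Qed.

Lemma force_along_row x y d : x \notin U -> unit_step d ->
  (x - d, y) \in C -> (x, y) \in C -> (x + d, y) \in C.
Proof.
move=> xU d1 Cprev Cxy; apply: (force_closure_rule Cxy).
  by rewrite hprod_cycle_adjE !inE; case/orP: d1 => /eqP->; rewrite eqxx ?orbT.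
move=> q; rewrite hprod_cycle_adjE (negbTE xU) orbF !inE.
by move: Cprev; case/orP: d1 => /eqP-> Cprev /orP[]/eqP-> ne //;
  rewrite ?opprK ?eqxx in Cprev ne.
Qed.

Lemma fill_row_walk a d y t : unit_step d ->
  (a, y) \in C -> (a + d, y) \in C ->
  (forall l, (0 < l < t)%N -> walk a d l \notin U) ->
  forall l, (l <= t)%N -> (walk a d l, y) \in C.
Proof.
move=> d1 C0 C1 inner.
have two_filled l : (l < t)%N -> (walk a d l, y) \in C /\ (walk a d l.+1, y) \in C.
  elim: l => [|l IHl] lt; first by rewrite walk1 walk0.
  have [Cl CSl] := IHl (ltnW lt); split=> //.
  rewrite walkS; apply: force_along_row => //; last by rewrite walkS addrK.
  by apply: inner; rewrite ltn0Sn.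
by case=> [|l] lt; [rewrite walk0 | case: (two_filled l lt)].
Qed.

End CycleProduct.

Section TwoRoots.
Variables (n m : nat) (i j : 'I_n.+2).

Lemma zero_forcing_number_two_roots :
  zero_forcing_number (hprod_adj (cycle_adj n.+2) [set i; j] (cycle_adj m.+2))
    <= 2 * m.+2.
Proof.
pose S := setX [set i; (i + 1)%R] [set: 'I_m.+2].
apply: leq_trans (zero_forcing_number_le (S := S) _) _; last first.
  by rewrite cardsX cardsT card_ord cards2 leq_mul2r ltnS leq_b1 orbT.
apply/zero_forcing_setP => -[x y]; set C := force_closure _ S.
have CS z : z \in S -> z \in C by apply/subsetP/subset_force_closure.
have [k kn jk] := walk_cover i j (unit_step1 n).
have off_roots l : (l < n.+2)%N -> l != 0%N -> l != k -> walk i 1%R l \notin [set i; j].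
  by move=> ln l0 lk; rewrite !inE jk -{2}(walk0 i 1%R) !walk_inj ?unit_step1 // negb_or l0.
have Ci y' : (i, y') \in C by apply: CS; rewrite !inE eqxx.
have Ci1 y' : ((i + 1)%R, y') \in C by apply: CS; rewrite !inE eqxx orbT.
have [l ln ->] := walk_cover i x (unit_step1 n).
have [lk | kl] := leqP l k.
  apply: (fill_row_walk (unit_step1 n) (Ci y) (Ci1 y) _ lk) => l' /andP[l'0 l'k].
  by apply: off_roots; lia.
have Ci_prev : ((i - 1)%R, y) \in C.
  apply: (force_at_root _ (Ci y)); first by rewrite !inE eqxx.
    by rewrite !inE eqxx orbT.
  by move=> q; rewrite !inE => /or4P[] /eqP-> ne //; rewrite eqxx in ne.
rewrite -(walk_back i (ltnW ln)).
have lk : (n.+2 - l <= n.+2 - k)%N by lia.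
apply: (fill_row_walk (unit_stepN1 n) (Ci y) Ci_prev _ lk).
move=> l' /andP[l'0 l'k]; have l'n : (l' <= n.+2)%N by lia.
by rewrite -(subKn l'n) walk_back ?leq_subr //; apply: off_roots; lia.
Qed.

End TwoRoots.

Section AdjacentRoots.
Variables (n m : nat) (i : 'I_n.+2).
Hypothesis m_ge2 : (2 <= m)%N.
Local Open Scope ring_scope.
Local Notation U := [set i; (i + 1)%R].
Local Notation G := (hprod_adj (cycle_adj n.+2) U (cycle_adj m.+2)).

Definition adjacent_roots_forcing_set : {set 'I_n.+2 * 'I_m.+2} :=
  [set (i, (k : nat)%:R) | k : 'I_m] :|: [set (i - 1, 0); (i - 1, -1)].
Local Notation S := adjacent_roots_forcing_set.
Local Notation C := (force_closure G S).

Lemma card_adjacent_roots_forcing_set : (#|S| <= m.+2)%N.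
Proof.
apply: leq_trans (leq_card_setU _ _) _; rewrite -[X in (_ <= X)%N](addn2 m).
apply: leq_add; last by rewrite cards2 ltnS leq_b1.
by apply: leq_trans (leq_imset_card _ _) _; rewrite card_ord.
Qed.

Let iU : i \in U. Proof. by rewrite !inE eqxx. Qed.
Let i1U : i + 1 \in U. Proof. by rewrite !inE eqxx orbT. Qed.

Let root_column_init k : (k < m)%N -> (i, k%:R) \in C.
Proof.
move=> km; apply/(subsetP (subset_force_closure _ _))/setUP; left.
by apply/imsetP; exists (Ordinal km).
Qed.

Let corner_init y : y \in [:: 0; -1] -> (i - 1, y) \in C.
Proof.
move=> y0; apply/(subsetP (subset_force_closure _ _))/setUP; right.
by move: y0; rewrite !inE => /orP[]/eqP->; rewrite eqxx ?orbT.
Qed.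

Lemma adjacent_roots_row y :
  (i, y) \in C -> (i - 1, y) \in C -> forall x, (x, y) \in C.
Proof.
move=> Ciy Cpy x; have [l ln ->] := walk_cover i x (unit_stepN1 n).
apply: (fill_row_walk (unit_stepN1 n) Ciy Cpy _ (_ : l <= n.+1)%N); last by lia.
move=> l' /andP[l'0 l'n].
have i1 : i + 1 = walk i (-1) n.+1 by rewrite (walk_back i (_ : 1 <= n.+2)%N) ?walk1.
by rewrite !inE i1 -{2}(walk0 i (-1)) !walk_inj ?unit_stepN1 //; lia.
Qed.

Lemma adjacent_roots_row0 x : (x, 0) \in C.
Proof.
by apply: adjacent_roots_row; [exact: (root_column_init (ltnW m_ge2)) | exact: corner_init].
Qed.

Lemma adjacent_roots_rowN1 x : (x, -1) \in C.
Proof.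
apply: adjacent_roots_row; last by apply: corner_init; rewrite !inE eqxx orbT.
rewrite -sub0r; apply: (force_at_root iU (adjacent_roots_row0 i)).
  by rewrite !inE eqxx !orbT.
move=> q; rewrite !inE => /or4P[] /eqP-> ne; rewrite ?adjacent_roots_row0 ?eqxx // in ne *.
by rewrite add0r; exact: (root_column_init m_ge2).
Qed.

Lemma adjacent_roots_column y : (i, y) \in C.
Proof.
have [ym | my] := ltnP y m; first by rewrite -(natr_Zp y); apply: root_column_init.
have [ym | ym] : (y : nat) = m \/ (y : nat) = m.+1 by have := ltn_ord y; lia.
  have -> : y = -1 - 1 by rewrite -(natr_Zp y) ym -[m%:R](addrK 1) natr1 natr_lastZp.
  apply: (force_at_root iU (adjacent_roots_rowN1 i)); first by rewrite !inE eqxx !orbT.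
  move=> q; rewrite !inE => /or4P[] /eqP-> ne;
    rewrite ?adjacent_roots_rowN1 ?eqxx // in ne *.
  by rewrite addNr; exact: (root_column_init (ltnW m_ge2)).
have -> : y = -1 by rewrite -(natr_Zp y) ym natr_lastZp.
exact: adjacent_roots_rowN1.
Qed.

Lemma adjacent_roots_rows k : (k <= m.+1)%N ->
  (forall x, (x, k%:R - 1) \in C) /\ (forall x, (x, k%:R) \in C).
Proof.
elim: k => [|k IHk] km.
  by rewrite sub0r; split; [exact: adjacent_roots_rowN1 | exact: adjacent_roots_row0].
have [row_prev row_k] := IHk (ltnW km).
split=> [x|]; first by rewrite -natr1 addrK.
have Ci1 : (i + 1, k.+1%:R) \in C.
  rewrite -natr1; apply: (force_at_root i1U (row_k _)); first by rewrite !inE eqxx !orbT.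
  by move=> q; rewrite !inE => /or4P[] /eqP-> ne; rewrite ?row_k ?row_prev ?eqxx // in ne *.
apply: adjacent_roots_row; first exact: adjacent_roots_column.
apply: (force_at_root iU (adjacent_roots_column k.+1%:R)); first by rewrite !inE eqxx orbT.
by move=> q; rewrite !inE => /or4P[] /eqP-> ne;
  rewrite ?adjacent_roots_column ?eqxx // in ne *.
Qed.

Lemma zero_forcing_set_adjacent_roots : zero_forcing_set G S.
Proof.
apply/zero_forcing_setP => -[x y].
by rewrite -(natr_Zp y); apply: (adjacent_roots_rows _).2; rewrite -ltnS.
Qed.

End AdjacentRoots.

Lemma zero_forcing_number_adjacent_roots n m (i : 'I_n.+2) : 2 <= m ->
  zero_forcing_number
    (hprod_adj (cycle_adj n.+2) [set i; (i + 1)%R] (cycle_adj m.+2)) <= m.+2.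
Proof.
move=> m_ge2; apply: leq_trans (card_adjacent_roots_forcing_set m i).
exact/zero_forcing_number_le/zero_forcing_set_adjacent_roots.
Qed.

Theorem mainTheorem5 (w h : nat) (i j : 'I_w) :
  4 <= w -> 4 <= h -> i != j ->
  let G := hprod_adj (cycle_adj w) [set i; j] (cycle_adj h) in
  (cycle_adj w i j -> zero_forcing_number G <= h) /\
  (~~ cycle_adj w i j -> zero_forcing_number G <= 2 * h).
Proof.
case: w i j => [|[|n]] i j // _; case: h => [|[|m]] // m_ge2 _ G.
split=> [|_]; last exact: zero_forcing_number_two_roots.
rewrite /G cycle_adjE => /orP[] /eqP->; first exact: zero_forcing_number_adjacent_roots.
have -> : [set i; (i - 1)%R] = [set (i - 1)%R; (i - 1 + 1)%R] by rewrite subrK setUC.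
exact: zero_forcing_number_adjacent_roots.
Qed.
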